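(* Let $s_Z$ be the Zeckendorf sum of digits function. Let $I_Z=(I_Z(n))_{n\ge1}$ be the increasing enumeration of the points of increase of $s_Z$, $C_Z=(C_Z(n))_{n\ge1}$ the increasing enumeration of the points of constancy of $s_Z$, and $D_Z=(D_Z(n))_{n\ge1}$ the sequence with $D_Z(1)=-1$ and $D_Z(n+1)$ equal to the $n$-th smallest point of decrease of $s_Z$ ($n\ge1$). Then: (i) $I_Z(1)=0$, and the sequence $\Delta I_Z$ is the fixed point of the morphism $3\mapsto 32,\ 2\mapsto 3$ (on the alphabet $\{2,3\}$); (ii) $C_Z(1)=1$, and $\Delta C_Z$ is the fixed point of the morphism on the alphabet $\{1,3,4\}$ given by $1\mapsto 14,\ 3\mapsto 14,\ 4\mapsto 3$; (iii) $D_Z(1)=-1$, and $\Delta D_Z$ is the fixed point of the morphism $5\mapsto 53,\ 3\mapsto 5$ (on the alphabet $\{3,5\}$).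
   Context: Fibonacci numbers: $F_0=0$, $F_1=1$, $F_n=F_{n-1}+F_{n-2}$. Every integer $N\ge0$ has a unique Zeckendorf expansion $N=\sum_{i\ge0}d_i(N)F_{i+2}$ with $d_i(N)\in\{0,1\}$ and no two consecutive digits equal to $1$; $s_Z(N)=\sum_i d_i(N)$. An integer $N\ge0$ is a point of increase, constancy, or decrease of $s_Z$ according as $s_Z(N+1)-s_Z(N)$ is $>0$, $=0$, or $<0$. For a sequence $V=(V(n))_{n\ge1}$, $\Delta V$ denotes the sequence $(V(n+1)-V(n))_{n\ge1}$, viewed as an infinite word. For a morphism $\mu$ and a letter $a$ with $\mu(a)$ beginning with $a$ and of length $\ge2$, the fixed point of $\mu$ is the infinite word $\lim_n\mu^n(a)$; in each case here the fixed point is unique. *)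

From Stdlib Require Import ClassicalEpsilon.
From mathcomp Require Import all_boot all_order all_algebra.
Set Implicit Arguments. Unset Strict Implicit. Unset Printing Implicit Defensive.
Import GRing.Theory Num.Theory.

Fixpoint fib (n : nat) : nat :=
  match n with
  | 0 => 0
  | 1 => 1
  | (m.+1 as k).+1 => fib k + fib m
  end.

Definition zeck_val (d : seq bool) : nat :=
  \sum_(i < size d) (nth false d i) * fib (i + 2).

Definition no_consec_ones (d : seq bool) : Prop :=
  forall i, ~~ (nth false d i && nth false d i.+1).

Definition zeck_rep (d : seq bool) (N : nat) : Prop :=
  no_consec_ones d /\ zeck_val d = N.

Definition sZ (N : nat) : nat :=
  epsilon (inhabits 0%N) (fun k => exists d, zeck_rep d N /\ count id d = k).

Definition incr_pt (N : nat) : Prop := (sZ N < sZ N.+1)%N.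
Definition const_pt (N : nat) : Prop := sZ N.+1 = sZ N.
Definition decr_pt (N : nat) : Prop := (sZ N.+1 < sZ N)%N.

Definition enumerates (P : nat -> Prop) (V : nat -> int) : Prop :=
  (forall n m, (1 <= n)%N -> (n < m)%N -> (V n < V m)%R) /\
  (forall n, (1 <= n)%N -> exists k, V n = Posz k /\ P k) /\
  (forall k, P k -> exists n, (1 <= n)%N /\ V n = Posz k).

(* Delta V as an infinite word indexed from 0: (Delta V)_i = V(i+2) - V(i+1). *)
Definition Delta (V : nat -> int) : nat -> int := fun i => (V i.+2 - V i.+1)%R.

Definition apply_morph (mu : int -> seq int) (w : seq int) : seq int :=
  flatten (map mu w).

(* x is the fixed point lim_n mu^n(a): it agrees with every mu^n(a) on its length. *)
Definition is_fixed_point (mu : int -> seq int) (a : int) (x : nat -> int) : Prop :=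
  forall n i, (i < size (iter n (apply_morph mu) [:: a]))%N ->
    x i = nth 0%R (iter n (apply_morph mu) [:: a]) i.

Definition muI (c : int) : seq int :=
  if c == 3%R then [:: 3%R; 2%R] else if c == 2%R then [:: 3%R] else [::].
Definition muC (c : int) : seq int :=
  if c == 1%R then [:: 1%R; 4%R] else if c == 3%R then [:: 1%R; 4%R]
  else if c == 4%R then [:: 3%R] else [::].
Definition muD (c : int) : seq int :=
  if c == 5%R then [:: 5%R; 3%R] else if c == 3%R then [:: 5%R] else [::].

From mathcomp Require Import all_boot all_order all_algebra zify.
From Stdlib Require Import ClassicalEpsilon.
Set Implicit Arguments. Unset Strict Implicit. Unset Printing Implicit Defensive.
Import Order.TTheory.

(* All Zeckendorf expansions of N have the digit count of the greedy one, so
   s_Z(F_{n+2} + M) = s_Z(M) + 1 for M < F_{n+1}.  Consequently, for n >= 5, N and F_{n+1} + N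
   have the same kind (increase, constancy or decrease) when N <= F_n + 1: below F_n - 1 by
   the shift rule, and at F_n - 1, F_n, F_n + 1 because for m >= 5 the points F_m - 1, F_m,
   F_m + 1 are always a decrease, an increase and a constancy.  Take a window of length F_{n+2}
   starting just after a point of a given kind (after the virtual point -1 for decreases): its
   points of that kind are those of the window of length F_{n+1} followed by those of the
   window of length F_n shifted by F_{n+1}, and the window ends on a point of the kind.  Hence
   the words of gaps satisfy W_{n+2} = W_{n+1} W_n, the recurrence of the iterates of each of
   the three morphisms, and two initial words are checked by computation. *)

Lemma fibSS n : fib n.+2 = fib n.+1 + fib n.
Proof. by []. Qed.

Lemma fib_gt0 n : 0 < fib n.+1.
Proof. by elim: n => [|n IHn] //; rewrite fibSS ltn_addr. Qed.

Lemma leq_fib : {homo fib : m n / m <= n}.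
Proof.
apply: homo_leq => [//|y x z|[|n] //]; first exact: leq_trans.
by rewrite fibSS leq_addr.
Qed.

Lemma ltn_fib n : n < fib n.+2.
Proof. by elim: n => [|n IHn] //; rewrite fibSS; have := fib_gt0 n; lia. Qed.

Definition sparse (f : nat -> bool) := forall i, ~~ (f i && f i.+1).

Definition zeck_sum (f : nat -> bool) m := \sum_(i < m) f i * fib (i + 2).

Lemma zeck_sumS f m : zeck_sum f m.+1 = zeck_sum f m + f m * fib m.+2.
Proof. by rewrite /zeck_sum big_ord_recr addn2. Qed.

Lemma zeck_sum_lt_fib f m : sparse f -> zeck_sum f m < fib m.+2.
Proof.
move=> sf; suff: zeck_sum f m < fib m.+2 /\ zeck_sum f m.+1 < fib m.+3 by case.
elim: m => [|m [IHm IHm1]]; first by rewrite zeck_sumS /zeck_sum big_ord0; case: (f 0).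
split=> //; rewrite zeck_sumS; case fm1: (f m.+1).
- have fm : f m = false by move: (sf m); rewrite fm1 andbT => /negbTE.
  by rewrite zeck_sumS fm mul0n addn0 mul1n [fib m.+4]fibSS; lia.
- by rewrite addn0 (leq_trans IHm1) ?leq_fib.
Qed.

Lemma zeck_sum_ge_digit (f : nat -> bool) m i : f i -> i < m -> fib (i + 2) <= zeck_sum f m.
Proof.
by move=> fi lt_im; rewrite /zeck_sum (bigD1 (Ordinal lt_im)) //= fi mul1n leq_addr.
Qed.

Lemma sparse_zeck_sum_exists n N : N < fib n.+2 ->
  exists f, [/\ sparse f, forall i, n <= i -> f i = false & zeck_sum f n = N].
Proof.
elim: n N => [|n IHn] N ltN.
  by exists (fun=> false); split=> //; rewrite /zeck_sum big_ord0; move: ltN => /=; lia.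
have [ltNn|geNn] := ltnP N (fib n.+2).
  have [f [sf f0 <-]] := IHn N ltNn.
  exists f; split=> // [i lt_ni|]; first by apply: f0; apply: ltnW.
  by rewrite zeck_sumS f0 ?mul0n ?addn0.
have ltM : N - fib n.+2 < fib n.+1 by move: ltN; rewrite fibSS; lia.
have [f [sf f0 fM]] := IHn _ (leq_trans ltM (leq_fib (leqnSn _))).
have f_top i : i.+1 = n -> f i = false.
  move=> Ei; apply/negP => fi; have := zeck_sum_ge_digit fi (_ : i < n).
  by rewrite fM addn2 Ei; lia.
exists (fun i => (i == n) || f i); split.
- move=> i /=; have [->|_] := eqVneq i n; first by rewrite (f0 n.+1) // gtn_eqF.
  by have [/f_top->|_] := eqVneq i.+1 n; last exact: sf.
- by move=> i lt_ni; rewrite f0 ?gtn_eqF //; apply: ltnW.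
- rewrite zeck_sumS eqxx mul1n -[RHS](subnK geNn) -fM; congr (_ + _).
  by apply: eq_bigr => i _; rewrite ltn_eqF.
Qed.

Fixpoint greedy_sZ n N :=
  if n is m.+1 then
    if N < fib m.+2 then greedy_sZ m N else (greedy_sZ m (N - fib m.+2)).+1
  else 0.

Lemma greedy_sZS n N : greedy_sZ n.+1 N =
  if N < fib n.+2 then greedy_sZ n N else (greedy_sZ n (N - fib n.+2)).+1.
Proof. by []. Qed.

Lemma greedy_sZ_stable n m N : N < fib n.+2 -> n <= m -> greedy_sZ m N = greedy_sZ n N.
Proof.
move=> ltN /subnKC <-; elim: (m - n) => [|k IHk]; first by rewrite addn0.
by rewrite addnS greedy_sZS (leq_trans ltN (leq_fib _)) // !ltnS leq_addr.
Qed.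

Lemma digit_count_greedy f m :
  sparse f -> \sum_(i < m) f i = greedy_sZ m (zeck_sum f m).
Proof.
move=> sf; elim: m => [|m IHm]; first by rewrite big_ord0.
rewrite zeck_sumS greedy_sZS big_ord_recr [in LHS]/= IHm; case: (f m).
- by rewrite mul1n ltnNge leq_addl addnK addn1.
- by rewrite mul0n !addn0 zeck_sum_lt_fib.
Qed.

Lemma count_id_nth d : count id d = \sum_(i < size d) nth false d i.
Proof. by elim: d => [|b d IHd] /=; rewrite ?big_ord0 // big_ord_recl IHd. Qed.

Lemma zeck_rep_exists N : exists d, zeck_rep d N.
Proof.
have [f [sf f0 fN]] := sparse_zeck_sum_exists (ltn_fib N).
have nth_f : nth false (mkseq f N) =1 f.
  move=> i; have [lt_iN|le_Ni] := ltnP i N; first by rewrite nth_mkseq.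
  by rewrite nth_default ?size_mkseq ?f0.
exists (mkseq f N); split; first by move=> i; rewrite !nth_f.
by rewrite /zeck_val size_mkseq -[RHS]fN; apply: eq_bigr => i _; rewrite nth_f.
Qed.

Lemma zeck_rep_count d N n : zeck_rep d N -> N < fib n.+2 -> count id d = greedy_sZ n N.
Proof.
move=> [sd <-] ltN; rewrite count_id_nth (digit_count_greedy _ sd).
have lt_d : zeck_val d < fib (size d).+2 by apply: zeck_sum_lt_fib.
by rewrite -(greedy_sZ_stable lt_d (leq_maxl _ n)) (greedy_sZ_stable ltN (leq_maxr _ _)).
Qed.

Lemma sZ_greedy n N : N < fib n.+2 -> sZ N = greedy_sZ n N.
Proof.
move=> ltN; rewrite /sZ.
have [|d [rep_d <-]] := epsilon_spec (inhabits 0)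
  (fun k => exists d, zeck_rep d N /\ count id d = k).
  by have [d rep_d] := zeck_rep_exists N; exists (count id d), d.
exact: zeck_rep_count rep_d ltN.
Qed.

Lemma sZ0 : sZ 0 = 0.
Proof. by rewrite (@sZ_greedy 0). Qed.

Lemma sZ_fib_add n M : M < fib n.+1 -> sZ (fib n.+2 + M) = (sZ M).+1.
Proof.
move=> ltM; rewrite (@sZ_greedy n.+1) ?greedy_sZS; last by rewrite [fib n.+3]fibSS ltn_add2l.
rewrite ltnNge leq_addr addKn (@sZ_greedy n) //.
exact: leq_trans ltM (leq_fib (leqnSn _)).
Qed.

Lemma sZ_fib n : sZ (fib n.+2) = 1.
Proof. by rewrite -[fib n.+2]addn0 sZ_fib_add ?sZ0 ?fib_gt0. Qed.

Lemma sZ_fib_pred n : sZ (fib n.+3).-1 = (sZ (fib n.+1).-1).+1.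
Proof.
have F_gt0 := fib_gt0 n.
rewrite -(@sZ_fib_add n); last by rewrite ltn_predL.
by congr sZ; rewrite [fib n.+3]fibSS; lia.
Qed.

Definition step_kind (s : nat -> nat) N :=
  if s N < s N.+1 then 0 else if s N.+1 == s N then 1 else 2.

Definition kind := step_kind sZ.

Lemma incr_ptE N : incr_pt N <-> kind N == 0.
Proof. by rewrite /incr_pt /kind /step_kind; case: ltngtP; split; lia. Qed.

Lemma const_ptE N : const_pt N <-> kind N == 1.
Proof. by rewrite /const_pt /kind /step_kind; case: ltngtP; split; lia. Qed.

Lemma decr_ptE N : decr_pt N <-> kind N == 2.
Proof. by rewrite /decr_pt /kind /step_kind; case: ltngtP; split; lia. Qed.

Lemma kind_small N : N < 20 -> kind N = step_kind (greedy_sZ 6) N.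
Proof. by move=> ltN; rewrite /kind /step_kind !(@sZ_greedy 6) // (leq_trans ltN). Qed.

Lemma kind_fib_add n x : x.+1 < fib n.+1 -> kind (fib n.+2 + x) = kind x.
Proof.
by move=> ltx; rewrite /kind /step_kind -addnS !sZ_fib_add ?ltnS ?eqSS // ltnW.
Qed.

Lemma kind_fib n : 4 <= n -> kind (fib n) = kind 0.
Proof.
case: n => [|[|n]] // le4n; rewrite -[fib _]addn0 kind_fib_add //.
by apply: (@leq_trans (fib 3)); rewrite ?leq_fib.
Qed.

Lemma kind_fib_succ n : 5 <= n -> kind (fib n).+1 = kind 1.
Proof.
case: n => [|[|n]] // le5n; rewrite -[(fib _).+1]addn1 kind_fib_add //.
by apply: (@leq_trans (fib 4)); rewrite ?leq_fib.
Qed.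

Lemma kind_fib_pred n : 5 <= n -> kind (fib n).-1 = 2.
Proof.
case: n => [|[|[|n]]] // le5n; rewrite /kind /step_kind prednK ?fib_gt0 // sZ_fib.
case: n le5n => [|[|n]] // _; rewrite !sZ_fib_pred.
by rewrite ltnNge ltnW //= eqn_leq andbF.
Qed.

Lemma kind_fib_shift n x : 5 <= n -> x <= (fib n).+1 -> kind (fib n.+1 + x) = kind x.
Proof.
case: n => // n le5n le_x; have F_gt0 := fib_gt0 n.
have [lt_x|[->|[->|->]]] :
  x.+1 < fib n.+1 \/ x = (fib n.+1).-1 \/ x = fib n.+1 \/ x = (fib n.+1).+1 by lia.
- exact: kind_fib_add.
- have -> : fib n.+2 + (fib n.+1).-1 = (fib n.+3).-1 by rewrite [fib n.+3]fibSS; lia.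
  by rewrite !kind_fib_pred //; lia.
- by rewrite -fibSS !kind_fib //; lia.
- by rewrite addnS -fibSS !kind_fib_succ //; lia.
Qed.

Definition gaps (h : int) (s : seq int) := pairmap (fun x y => y - x)%R h s.

Lemma gaps_shift h c s : gaps (h + c)%R [seq (x + c)%R | x <- s] = gaps h s.
Proof. by elim: s h => [|x s IHs] h //=; rewrite IHs; congr (_ :: _); lia. Qed.

Lemma gaps_cat_shift h c s t : last h s = (h + c)%R ->
  gaps h (s ++ [seq (x + c)%R | x <- t]) = gaps h s ++ gaps h t.
Proof.
by move=> last_s; rewrite /gaps pairmap_cat last_s; congr (_ ++ _); apply: gaps_shift.
Qed.

Lemma Delta_gaps (V : nat -> int) h s :
    V 1 = h -> (forall j, j < size s -> V j.+2 = nth 0%R s j) ->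
  forall i, i < size (gaps h s) -> Delta V i = nth 0%R (gaps h s) i.
Proof.
move=> V1 Vs i; rewrite size_pairmap => lt_i; rewrite (nth_pairmap 0%R) // /Delta Vs //.
by case: i lt_i => [|i] lt_i; rewrite /= ?V1 ?Vs // ltnW.
Qed.

Definition window k a n := [seq N <- iota a (fib n) | kind N == k].

Definition window_gaps k a n := gaps (a%:Z - 1)%R (map Posz (window k a n)).

Lemma window_small k a n : a + fib n <= 20 ->
  window k a n = [seq N <- iota a (fib n) | step_kind (greedy_sZ 6) N == k].
Proof.
move=> small; apply: eq_in_filter => N; rewrite mem_iota => /andP [_ ltN].
by rewrite kind_small // (leq_trans ltN).
Qed.

Lemma window_rec k a n : a <= 2 -> 5 <= n ->
  window k a n.+2 = window k a n.+1 ++ map (addn (fib n.+1)) (window k a n).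
Proof.
move=> le_a2 le5n; rewrite /window fibSS iotaD filter_cat [a + _]addnC iotaDl filter_map.
congr (_ ++ map _ _); apply: eq_in_filter => N; rewrite mem_iota => /andP [_ ltN] /=.
by rewrite kind_fib_shift //; lia.
Qed.

Lemma last_window k a n : kind (a + fib n.+1).-1 = k ->
  last (a%:Z - 1)%R (map Posz (window k a n.+1)) = (a%:Z - 1 + (fib n.+1)%:Z)%R.
Proof.
rewrite /window; have := fib_gt0 n; case: (fib n.+1) => // F _.
rewrite addnS succnK => kind_last; rewrite -[F.+1]addn1 iotaD filter_cat map_cat last_cat /=.
by rewrite kind_last eqxx /=; lia.
Qed.

Lemma window_gaps_rec k a n : a <= 2 -> 5 <= n -> kind (a + fib n.+1).-1 = k ->
  window_gaps k a n.+2 = window_gaps k a n.+1 ++ window_gaps k a n.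
Proof.
move=> le_a2 le5n last_k.
have shiftE : map Posz (map (addn (fib n.+1)) (window k a n)) =
              [seq (x + (fib n.+1)%:Z)%R | x <- map Posz (window k a n)].
  by rewrite -!map_comp; apply: eq_map => N /=; lia.
by rewrite /window_gaps window_rec // map_cat shiftE (gaps_cat_shift _ (last_window last_k)).
Qed.

Section Enumeration.

Variables (P : nat -> Prop) (V : nat -> int).
Hypothesis enumV : enumerates P V.

Lemma enum_le n m : 0 < n -> n <= m -> (V n <= V m)%R.
Proof.
move=> n_gt0; rewrite leq_eqVlt => /predU1P [->|lt_nm]; first exact: lexx.
exact: ltW (enumV.1 _ _ n_gt0 lt_nm).
Qed.

Lemma enum_min n k :
  0 < n -> P k -> (forall m, 0 < m < n -> (V m < k%:Z)%R) -> (V n <= k%:Z)%R.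
Proof.
move=> n_gt0 Pk; have [m [m_gt0 <-]] := enumV.2.2 k Pk => below.
have [lt_mn|le_nm] := ltnP m n; last exact: enum_le.
by move: (below m); rewrite m_gt0 lt_mn ltxx => /(_ isT).
Qed.

End Enumeration.

Lemma nth_filter_iota_min (p : pred nat) B j k :
  let s := [seq N <- iota 0 B | p N] in
  j < size s -> p k -> k < B -> (forall i, i < j -> nth 0 s i < k) -> nth 0 s j <= k.
Proof.
move=> s lt_js pk lt_kB below.
have s_k : k \in s by rewrite mem_filter pk mem_iota.
have [lt_kj|le_jk] := ltnP (index k s) j.
  by have := below _ lt_kj; rewrite nth_index // ltnn.
rewrite -[leqRHS](nth_index 0 s_k); apply: sorted_leq_nth => //; first exact: leq_trans.
- by apply: sorted_filter; [exact: leq_trans | exact: iota_sorted].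
- by rewrite inE index_mem.
Qed.

Lemma enum_nth_filter (P : nat -> Prop) (p : pred nat) (V : nat -> int) B :
    (forall N, P N <-> p N) -> enumerates P V ->
  forall j, j < size [seq N <- iota 0 B | p N] ->
    V j.+1 = Posz (nth 0 [seq N <- iota 0 B | p N] j).
Proof.
move=> Pp enumV; set s := [seq N <- iota 0 B | p N].
have s_sorted : sorted ltn s.
  by apply: sorted_filter; [exact: ltn_trans | exact: iota_ltn_sorted].
have s_lt i j : i < j -> j < size s -> nth 0 s i < nth 0 s j.
  move=> lt_ij lt_js; apply: (sorted_ltn_nth ltn_trans 0 s_sorted) => //.
  by rewrite inE (ltn_trans lt_ij).
elim/ltn_ind => j IHj lt_js.
have := mem_nth 0 lt_js; rewrite mem_filter mem_iota => /andP [p_sj /andP [_ lt_sjB]].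
have [k [Vk Pk]] := enumV.2.1 j.+1 (ltn0Sn j).
have le_V : (V j.+1 <= (nth 0 s j)%:Z)%R.
  apply: (enum_min enumV) => //; first exact/Pp.
  by case=> // m /andP [_ lt_mj]; rewrite IHj ?ltz_nat ?s_lt //; lia.
have le_k : nth 0 s j <= k.
  move: le_V; rewrite Vk lez_nat => le_k_sj.
  apply: nth_filter_iota_min => //; [exact/Pp | exact: leq_ltn_trans le_k_sj lt_sjB |].
  move=> i lt_ij; rewrite -ltz_nat -IHj -?Vk ?(enumV.1) //; exact: ltn_trans lt_ij lt_js.
by apply/eqP; rewrite Vk eqz_nat eqn_leq le_k -lez_nat -Vk le_V.
Qed.

Lemma enum_window (P : nat -> Prop) (V : nat -> int) k a m :
    (forall N, P N <-> kind N == k) -> enumerates P V ->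
    count (fun N => kind N == k) (iota 0 a) = m ->
  forall n j, j < size (window k a n) -> V (m + j).+1 = Posz (nth 0 (window k a n) j).
Proof.
move=> Pk enumV count_a n j lt_j.
have filterE : [seq N <- iota 0 (a + fib n) | kind N == k] =
               [seq N <- iota 0 a | kind N == k] ++ window k a n by rewrite iotaD filter_cat.
have size_a : size [seq N <- iota 0 a | kind N == k] = m by rewrite size_filter.
rewrite (enum_nth_filter (B := a + fib n) Pk enumV); last first.
  by rewrite filterE size_cat size_a ltn_add2l.
by rewrite filterE nth_cat size_a ltnNge leq_addr /= addKn.
Qed.

Lemma recurrence2_eq (T : Type) (op : T -> T -> T) (u v : nat -> T) :
    (forall n, u n.+2 = op (u n.+1) (u n)) -> (forall n, v n.+2 = op (v n.+1) (v n)) ->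
  u 0 = v 0 -> u 1 = v 1 -> u =1 v.
Proof.
move=> uSS vSS u0 u1 n; suff: u n = v n /\ u n.+1 = v n.+1 by case.
by elim: n => [|n [IHn IHn1]] //; split; rewrite // uSS vSS IHn IHn1.
Qed.

Section Morphisms.

Variable mu : int -> seq int.

Lemma apply_morph_cat s t : apply_morph mu (s ++ t) = apply_morph mu s ++ apply_morph mu t.
Proof. by rewrite /apply_morph map_cat flatten_cat. Qed.

Lemma iter_apply_morph_cat n s t :
  iter n (apply_morph mu) (s ++ t) = iter n (apply_morph mu) s ++ iter n (apply_morph mu) t.
Proof. by elim: n => [|n IHn] //=; rewrite IHn apply_morph_cat. Qed.

Lemma prefix_apply_morph s t : prefix s t -> prefix (apply_morph mu s) (apply_morph mu t).
Proof. by case/prefixP => w ->; rewrite apply_morph_cat prefix_prefix. Qed.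

Variables x y : int.
Hypothesis mu_x : mu x = [:: x; y].

Lemma prefix_iter_morph m n : m <= n ->
  prefix (iter m (apply_morph mu) [:: x]) (iter n (apply_morph mu) [:: x]).
Proof.
move: m n; apply: (homo_leq (r := fun s t : seq int => prefix s t)) => [|s t w|n].
- exact: prefix_refl.
- exact: prefix_trans.
elim: n => [|n IHn]; last exact: prefix_apply_morph.
by rewrite /= /apply_morph /= mu_x; apply: (prefix_prefix [:: x] [:: y]).
Qed.

Lemma is_fixed_point_from (z : nat -> int) c :
    (forall n i, i < size (iter (n + c) (apply_morph mu) [:: x]) ->
       z i = nth 0%R (iter (n + c) (apply_morph mu) [:: x]) i) ->
  is_fixed_point mu x z.
Proof.
move=> agree n i lt_i; have /prefixP [w Ew] := prefix_iter_morph (leq_addr c n).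
by rewrite (agree n) Ew ?nth_cat ?lt_i // size_cat ltn_addr.
Qed.

Lemma iter_morph_rec p :
    iter p.+1 (apply_morph mu) [:: y] = iter p (apply_morph mu) [:: x] ->
  forall n, p <= n -> iter n.+2 (apply_morph mu) [:: x] =
    iter n.+1 (apply_morph mu) [:: x] ++ iter n (apply_morph mu) [:: x].
Proof.
move=> mu_y n le_pn.
have iter_y : iter n.+1 (apply_morph mu) [:: y] = iter n (apply_morph mu) [:: x].
  by rewrite -(subnK le_pn) -addnS !iterD mu_y.
rewrite iterSr (_ : apply_morph mu [:: x] = [:: x] ++ [:: y]) ?iter_apply_morph_cat ?iter_y //.
by rewrite /apply_morph /= mu_x.
Qed.

End Morphisms.

(* [a - 1 = V 1] is the point of kind [k] preceding the windows; it is the virtual point [-1]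
   for decreases. *)
Lemma Delta_fixed_point (V : nat -> int) k a mu x y p c :
    a <= 2 -> (forall n, 6 <= n -> kind (a + fib n).-1 = k) -> V 1 = (a%:Z - 1)%R ->
    (forall n j, j < size (window k a n) -> V j.+2 = Posz (nth 0 (window k a n) j)) ->
    mu x = [:: x; y] -> iter p.+1 (apply_morph mu) [:: y] = iter p (apply_morph mu) [:: x] ->
    p <= c ->
    window_gaps k a 5 = iter c (apply_morph mu) [:: x] ->
    window_gaps k a 6 = iter c.+1 (apply_morph mu) [:: x] ->
  is_fixed_point mu x (Delta V).
Proof.
move=> le_a2 last_k V1 V_window mu_x mu_y le_pc W5 W6.
have W_iter : forall n, window_gaps k a (n + 5) = iter (n + c) (apply_morph mu) [:: x].
  apply: (recurrence2_eq (op := cat)) => // n.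
  - by rewrite !addSn window_gaps_rec ?last_k //; lia.
  - by rewrite !addSn (iter_morph_rec mu_x mu_y) // (leq_trans le_pc (leq_addl _ _)).
apply: (is_fixed_point_from mu_x (c := c)) => n i; rewrite -W_iter.
apply: Delta_gaps => // j; rewrite size_map => lt_j.
by rewrite (nth_map 0) //; apply: V_window.
Qed.

Lemma IZ_spec (IZ : nat -> int) :
  enumerates incr_pt IZ -> IZ 1 = 0%R /\ is_fixed_point muI 3%R (Delta IZ).
Proof.
move=> enumI; have kind0 : kind 0 = 0 by rewrite kind_small.
have IZ1 : IZ 1 = 0%R by rewrite (enum_nth_filter (B := 1) (j := 0) incr_ptE enumI) /= kind0.
split=> //; apply: (Delta_fixed_point (k := 0) (a := 1) (y := 2%R) (p := 0) (c := 1)) => //.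
- by move=> n le6n; rewrite add1n succnK kind_fib ?kind0 //; lia.
- by apply: (enum_window (m := 1) incr_ptE enumI); rewrite /= kind0.
- by rewrite /window_gaps window_small.
- by rewrite /window_gaps window_small.
Qed.

Lemma CZ_spec (CZ : nat -> int) :
  enumerates const_pt CZ -> CZ 1 = 1%R /\ is_fixed_point muC 1%R (Delta CZ).
Proof.
move=> enumC; have [kind0 kind1] : kind 0 = 0 /\ kind 1 = 1 by rewrite !kind_small.
have CZ1 : CZ 1 = 1%R.
  by rewrite (enum_nth_filter (B := 2) (j := 0) const_ptE enumC) /= kind0 kind1.
split=> //; apply: (Delta_fixed_point (k := 1) (a := 2) (y := 4%R) (p := 1) (c := 1)) => //.
- by move=> n le6n; rewrite add2n succnK kind_fib_succ ?kind1 //; lia.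
- by apply: (enum_window (m := 1) const_ptE enumC); rewrite /= kind0 kind1.
- by rewrite /window_gaps window_small.
- by rewrite /window_gaps window_small.
Qed.

Lemma DZ_spec (DZ : nat -> int) : DZ 1 = (-1)%R ->
  enumerates decr_pt (fun n => DZ n.+1) -> is_fixed_point muD 5%R (Delta DZ).
Proof.
move=> DZ1 enumD.
apply: (Delta_fixed_point (k := 2) (a := 0) (y := 3%R) (p := 0) (c := 0)) => //.
- by move=> n le6n; rewrite add0n kind_fib_pred //; lia.
- exact: (enum_window (m := 0) decr_ptE enumD).
- by rewrite /window_gaps window_small.
- by rewrite /window_gaps window_small.
Qed.

Theorem theorem3 (IZ CZ DZ : nat -> int) :
  enumerates incr_pt IZ ->
  enumerates const_pt CZ ->
  DZ 1%N = (-1)%R ->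
  enumerates decr_pt (fun n => DZ n.+1) ->
  (IZ 1%N = 0%R /\ is_fixed_point muI 3%R (Delta IZ)) /\
  (CZ 1%N = 1%R /\ is_fixed_point muC 1%R (Delta CZ)) /\
  (DZ 1%N = (-1)%R /\ is_fixed_point muD 5%R (Delta DZ)).
Proof.
move=> enumI enumC DZ1 enumD.
by split; [exact: IZ_spec | split; [exact: CZ_spec | split; last exact: DZ_spec]].
Qed.
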